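(* Let $k\geq2$, let $X$ be a quasi-Polish space and let $\theta\geq1$ be a countable ordinal. Then $$\bigcup\{\mathbf{\Sigma}^0_\theta(X,F)\mid F\text{ a countable }k\text{-forest}\}=(\mathbf{\Delta}^0_{\theta+1}(X))_k.$$
   Context: $P\omega$ is the set of subsets of $\omega$ with the Scott topology (basic open sets $\{A\subseteq\omega\mid F\subseteq A\}$, $F$ finite). A space is quasi-Polish (in the sense of de Brecht) iff it is homeomorphic to a $\mathbf{\Pi}^0_2$-subset of $P\omega$ with the induced topology. For a space $Y$: $\mathbf{\Sigma}^0_1(Y)$ the open sets; $\mathbf{\Sigma}^0_2(Y)$ the countable unions of sets $U\setminus V$ with $U,V$ open; for $2<\alpha<\omega_1$, $\mathbf{\Sigma}^0_\alpha(Y)$ the countable unions of complements of sets in $\bigcup_{\beta<\alpha}\mathbf{\Sigma}^0_\beta(Y)$ (with $\mathbf{\Sigma}^0_0(Y)=\{\emptyset\}$); $\mathbf{\Pi}^0_\alpha$ the complements; $\mathbf{\Delta}^0_\alpha=\mathbf{\Sigma}^0_\alpha\cap\mathbf{\Pi}^0_\alpha$. A $k$-partition of $X$ is a function $A:X\to k=\{0,\dots,k-1\}$; $(\mathbf{\Delta}^0_{\theta+1}(X))_k$ is the set of $k$-partitions $A$ with $A^{-1}(i)\in\mathbf{\Delta}^0_{\theta+1}(X)$ for all $i<k$. A countable $k$-forest is a countable poset $(P;\leq)$ without infinite chains in which every upper cone $\{y\mid x\leq y\}$ is a chain, with a labeling $c:P\to k$. $\mathbf{\Sigma}^0_\theta(X,F)$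 is the set of $k$-partitions $A:X\to k$ for which there exist $B_p\in\mathbf{\Sigma}^0_\theta(X)$ ($p\in F$) with $\bigcup_pB_p=X$ and $A^{-1}(i)=\bigcup\{B_p\setminus\bigcup_{q<p}B_q\mid c(p)=i\}$ for each $i<k$. *)

From Stdlib Require Import List Arith.

Definition Pomega := nat -> Prop.

Definition scott_open (W : Pomega -> Prop) : Prop :=
  forall A, W A -> exists F : list nat,
    (forall n, In n F -> A n) /\
    (forall B : Pomega, (forall n, In n F -> B n) -> W B).

Definition Sigma02 {T : Type} (opn : (T -> Prop) -> Prop) (A : T -> Prop) : Prop :=
  exists U V : nat -> T -> Prop,
    (forall n, opn (U n)) /\ (forall n, opn (V n)) /\
    (forall x, A x <-> exists n, U n x /\ ~ V n x).

Definition Pi02 {T : Type} (opn : (T -> Prop) -> Prop) (A : T -> Prop) : Prop :=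
  Sigma02 opn (fun x => ~ A x).

Definition quasi_polish {X : Type} (opn : (X -> Prop) -> Prop) : Prop :=
  exists (S : Pomega -> Prop) (f : X -> Pomega),
    Pi02 scott_open S /\
    (forall x, S (f x)) /\
    (forall x y, f x = f y -> x = y) /\
    (forall A, S A -> exists x, f x = A) /\
    (forall U : X -> Prop,
        opn U <-> exists W, scott_open W /\ (forall x, U x <-> W (f x))).

(** * Countable ordinals
    A countable ordinal is represented by an element [a] of a well-ordering
    [R] of nat (strict, total, well-founded); the ordinal denoted is the order
    type of the initial segment {b | R b a}. Every countable ordinal arises. *)
Definition nat_wellorder (R : nat -> nat -> Prop) : Prop :=
  (forall a, ~ R a a) /\
  (forall a b c, R a b -> R b c -> R a c) /\
  (forall a b, a <> b -> R a b \/ R b a) /\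
  well_founded R.

Definition ord_is0 (R : nat -> nat -> Prop) (a : nat) : Prop :=
  forall b, ~ R b a.
Definition ord_is1 (R : nat -> nat -> Prop) (a : nat) : Prop :=
  exists b, R b a /\ forall c, R c a -> c = b.
Definition ord_is2 (R : nat -> nat -> Prop) (a : nat) : Prop :=
  exists b1 b2, b1 <> b2 /\ R b1 a /\ R b2 a /\
    forall c, R c a -> c = b1 \/ c = b2.
Definition ord_gt2 (R : nat -> nat -> Prop) (a : nat) : Prop :=
  exists b1 b2 b3, b1 <> b2 /\ b1 <> b3 /\ b2 <> b3 /\
    R b1 a /\ R b2 a /\ R b3 a.

Definition ord_succ (R : nat -> nat -> Prop) (a b : nat) : Prop :=
  R a b /\ forall c, R c b -> c = a \/ R c a.

Inductive Sigma0 {T : Type} (opn : (T -> Prop) -> Prop)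
    (R : nat -> nat -> Prop) : nat -> (T -> Prop) -> Prop :=
| Sigma0_zero a A :
    ord_is0 R a -> (forall x, ~ A x) -> Sigma0 opn R a A
| Sigma0_one a A :
    ord_is1 R a -> opn A -> Sigma0 opn R a A
| Sigma0_two a A :
    ord_is2 R a -> Sigma02 opn A -> Sigma0 opn R a A
| Sigma0_gt2 a A (B : nat -> T -> Prop) :
    ord_gt2 R a ->
    (forall n, exists b, R b a /\ Sigma0 opn R b (B n)) ->
    (forall x, A x <-> exists n, ~ B n x) ->
    Sigma0 opn R a A.

Definition Delta0 {T : Type} (opn : (T -> Prop) -> Prop)
    (R : nat -> nat -> Prop) (a : nat) (A : T -> Prop) : Prop :=
  Sigma0 opn R a A /\ Sigma0 opn R a (fun x => ~ A x).

Definition kpartition {X : Type} (k : nat) (A : X -> nat) : Prop :=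
  forall x, A x < k.

Definition Delta0_k {X : Type} (opn : (X -> Prop) -> Prop)
    (R : nat -> nat -> Prop) (a k : nat) (A : X -> nat) : Prop :=
  kpartition k A /\
  forall i, i < k -> Delta0 opn R a (fun x => A x = i).

Definition countable_kforest (k : nat) (P : Type) (le : P -> P -> Prop)
    (c : P -> nat) : Prop :=
  (forall p, le p p) /\
  (forall p q, le p q -> le q p -> p = q) /\
  (forall p q r, le p q -> le q r -> le p r) /\
  (exists e : P -> nat, forall p q, e p = e q -> p = q) /\
  (forall C : P -> Prop,
      (forall p q, C p -> C q -> le p q \/ le q p) ->
      exists l : list P, forall p, C p -> In p l) /\
  (forall x y z, le x y -> le x z -> le y z \/ le z y) /\
  (forall p, c p < k).

Definition Sigma0_forest {X : Type} (opn : (X -> Prop) -> Prop)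
    (R : nat -> nat -> Prop) (a k : nat)
    (P : Type) (le : P -> P -> Prop) (c : P -> nat) (A : X -> nat) : Prop :=
  kpartition k A /\
  exists B : P -> X -> Prop,
    (forall p, Sigma0 opn R a (B p)) /\
    (forall x, exists p, B p x) /\
    (forall i, i < k -> forall x,
        A x = i <->
        exists p, c p = i /\ B p x /\
          (forall q, le q p -> q <> p -> ~ B q x)).

(* Forest partitions of Sigma^0_theta sets are Delta^0_(theta+1): the level sets and
   their complements are countable unions of differences of Sigma^0_theta sets.
   Conversely, the level sets of a Delta^0_(theta+1) partition are countable unions of
   differences of Sigma^0_theta sets.  Adding these countably many sets to the
   topology gives a finer quasi-Polish topology all of whose open sets are
   Sigma^0_theta; in it the partition is Delta^0_2.  A Baire category argument
   (Hausdorff-Kuratowski) then glues open forest partitions defined on the basic open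
   sets of Pomega into one open forest partition over a countable forest, which is a
   Sigma^0_theta forest partition for the original topology. *)

From Stdlib Require Import List Arith Lia Classical IndefiniteDescription
  FunctionalExtensionality PropExtensionality Cantor.

Lemma pred_ext {T : Type} (A B : T -> Prop) : (forall x, A x <-> B x) -> A = B.
Proof.
  intro H. apply functional_extensionality; intro x.
  apply propositional_extensionality, H.
Qed.

Lemma pred_transport {T : Type} (F : (T -> Prop) -> Prop) (A B : T -> Prop) :
  (forall x, A x <-> B x) -> F A -> F B.
Proof. intro H. now rewrite (pred_ext A B H). Qed.

Lemma or_as_ex {T : Type} (A B : T -> Prop) x :
  A x \/ B x <-> exists n, (match n with 0 => A | _ => B end) x.
Proof. split; [intros [H|H]; [exists 0|exists 1]; auto | intros [[|n] H]; auto]. Qed.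

Definition pairn (a b : nat) : nat := Cantor.to_nat (a, b).
Definition unpair1 (n : nat) : nat := fst (Cantor.of_nat n).
Definition unpair2 (n : nat) : nat := snd (Cantor.of_nat n).

Lemma unpair1_pair a b : unpair1 (pairn a b) = a.
Proof. unfold unpair1, pairn. now rewrite Cantor.cancel_of_to. Qed.

Lemma unpair2_pair a b : unpair2 (pairn a b) = b.
Proof. unfold unpair2, pairn. now rewrite Cantor.cancel_of_to. Qed.

Lemma pair_unpair n : pairn (unpair1 n) (unpair2 n) = n.
Proof.
  unfold unpair1, unpair2, pairn. rewrite <- surjective_pairing.
  apply Cantor.cancel_to_of.
Qed.

Lemma ex2_as_ex {T : Type} (A : nat -> nat -> T -> Prop) x :
  (exists n m, A n m x) <-> exists p, A (unpair1 p) (unpair2 p) x.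
Proof.
  split.
  - intros [n [m H]]. exists (pairn n m). now rewrite unpair1_pair, unpair2_pair.
  - intros [p H]. eauto.
Qed.

Definition interleave {A : Type} (a b : nat -> A) (m : nat) : A :=
  if Nat.even m then a (Nat.div2 m) else b (Nat.div2 m).

Lemma interleave_even {A : Type} (a b : nat -> A) m : interleave a b (2 * m) = a m.
Proof. unfold interleave. now rewrite Nat.even_even, Nat.div2_even. Qed.

Lemma interleave_odd {A : Type} (a b : nat -> A) m : interleave a b (2 * m + 1) = b m.
Proof. unfold interleave. now rewrite Nat.even_odd, Nat.div2_odd'. Qed.

Fixpoint list_code (E : list nat) : nat :=
  match E with nil => 0 | a :: E => S (pairn a (list_code E)) end.

Fixpoint list_decode_fuel (fuel n : nat) : list nat :=
  match fuel, n with
  | S f, S m => unpair1 m :: list_decode_fuel f (unpair2 m)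
  | _, _ => nil
  end.

(* [list_code E] is at least the length of [E], so [n] units of fuel suffice. *)
Definition list_decode (n : nat) : list nat := list_decode_fuel n n.

Lemma list_decode_fuel_code E fuel :
  list_code E <= fuel -> list_decode_fuel fuel (list_code E) = E.
Proof.
  revert fuel. induction E as [|a E IH]; intros [|f] H; simpl in *; auto; try lia.
  rewrite unpair1_pair, unpair2_pair, IH; auto.
  pose proof (Cantor.to_nat_non_decreasing a (list_code E)). unfold pairn in H. lia.
Qed.

Lemma list_decode_code E : list_decode (list_code E) = E.
Proof. now apply list_decode_fuel_code. Qed.

Record open_family {T : Type} (opn : (T -> Prop) -> Prop) : Prop := {
  open_and : forall U V, opn U -> opn V -> opn (fun x => U x /\ V x);
  open_ex : forall U : nat -> T -> Prop,
    (forall n, opn (U n)) -> opn (fun x => exists n, U n x);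
  open_full : opn (fun _ => True);
  open_empty : opn (fun _ => False) }.

Section Sigma02.
Context {T : Type} (opn : (T -> Prop) -> Prop).

Lemma Sigma02_ex (A : nat -> T -> Prop) :
  (forall n, Sigma02 opn (A n)) -> Sigma02 opn (fun x => exists n, A n x).
Proof.
  intro HA.
  destruct (functional_choice (fun n (UV : (nat -> T -> Prop) * (nat -> T -> Prop)) =>
    (forall m, opn (fst UV m)) /\ (forall m, opn (snd UV m)) /\
    forall x, A n x <-> exists m, fst UV m x /\ ~ snd UV m x)) as [UV HUV].
  { intro n. destruct (HA n) as [U [V H]]. now exists (U, V). }
  exists (fun p => fst (UV (unpair1 p)) (unpair2 p)),
         (fun p => snd (UV (unpair1 p)) (unpair2 p)).
  split; [|split]; try (intro; apply HUV).
  intro x. rewrite <- (ex2_as_ex (fun n m x => fst (UV n) m x /\ ~ snd (UV n) m x)).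
  split; intros [n Hn]; exists n; now apply HUV.
Qed.

Lemma Sigma02_or A B :
  Sigma02 opn A -> Sigma02 opn B -> Sigma02 opn (fun x => A x \/ B x).
Proof.
  intros HA HB. apply (pred_transport _ _ _ (fun x => iff_sym (or_as_ex A B x))).
  apply Sigma02_ex. now intros [|n].
Qed.

Lemma Pi02_not A : Sigma02 opn A -> Pi02 opn (fun x => ~ A x).
Proof.
  unfold Pi02. apply pred_transport. intro x. split; [tauto | apply NNPP].
Qed.

Lemma Pi02_all (A : nat -> T -> Prop) :
  (forall n, Pi02 opn (A n)) -> Pi02 opn (fun x => forall n, A n x).
Proof.
  intro HA. unfold Pi02. apply (pred_transport _ (fun x => exists n, ~ A n x)).
  - intro x. split; [firstorder | apply not_all_ex_not].
  - now apply Sigma02_ex.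
Qed.

Lemma Pi02_and A B : Pi02 opn A -> Pi02 opn B -> Pi02 opn (fun x => A x /\ B x).
Proof.
  intros HA HB. unfold Pi02. apply (pred_transport _ (fun x => ~ A x \/ ~ B x)).
  - intro x. tauto.
  - now apply Sigma02_or.
Qed.

Context (Hop : open_family opn).

Lemma open_or U V : opn U -> opn V -> opn (fun x => U x \/ V x).
Proof.
  intros HU HV. apply (pred_transport _ _ _ (fun x => iff_sym (or_as_ex U V x))).
  apply (open_ex _ Hop). now intros [|n].
Qed.

Lemma Sigma02_open U : opn U -> Sigma02 opn U.
Proof.
  intro HU. exists (fun _ => U), (fun _ _ => False).
  split; [|split]; [auto | intro; now apply open_empty | intro x].
  split; [now exists 0 | intros [_ [H _]]; auto].
Qed.

Lemma Sigma02_copen U : opn U -> Sigma02 opn (fun x => ~ U x).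
Proof.
  intro HU. exists (fun _ _ => True), (fun _ => U).
  split; [|split]; [intro; now apply open_full | auto | intro x].
  split; [now exists 0 | intros [_ [_ H]]; auto].
Qed.

Lemma Sigma02_and A B :
  Sigma02 opn A -> Sigma02 opn B -> Sigma02 opn (fun x => A x /\ B x).
Proof.
  intros [U [V [HU [HV HA]]]] [U' [V' [HU' [HV' HB]]]].
  exists (fun p x => U (unpair1 p) x /\ U' (unpair2 p) x),
         (fun p x => V (unpair1 p) x \/ V' (unpair2 p) x).
  split; [|split]; intro.
  - now apply open_and.
  - now apply open_or.
  - rewrite HA, HB, <- (ex2_as_ex (fun n m x => (U n x /\ U' m x) /\ ~ (V n x \/ V' m x))).
    firstorder.
Qed.

End Sigma02.

Definition scott_basic (F : list nat) (y : Pomega) : Prop := forall n, In n F -> y n.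

Lemma scott_basic_cons a E y : scott_basic (a :: E) y <-> y a /\ scott_basic E y.
Proof.
  unfold scott_basic. split; [intro H; split; auto using in_eq, in_cons|].
  intros [Ha HE] n [<-|Hn]; auto.
Qed.

Lemma scott_basic_app E F y : scott_basic (E ++ F) y <-> scott_basic E y /\ scott_basic F y.
Proof.
  unfold scott_basic. setoid_rewrite in_app_iff. firstorder.
Qed.

Lemma scott_basic_incl E F y : incl E F -> scott_basic F y -> scott_basic E y.
Proof. unfold incl, scott_basic. auto. Qed.

Lemma scott_open_family : open_family scott_open.
Proof.
  split.
  - intros U V HU HV A [HA1 HA2].
    destruct (HU A HA1) as [F [HF1 HF2]], (HV A HA2) as [G [HG1 HG2]].
    exists (F ++ G). split; [now apply scott_basic_app|].
    intros B HB. apply scott_basic_app in HB. split; [apply HF2|apply HG2]; tauto.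
  - intros U HU A [n Hn]. destruct (HU n A Hn) as [F [HF1 HF2]].
    exists F. split; auto. intros B HB. exists n. auto.
  - intros A _. exists nil. split; [intros n []|auto].
  - intros A [].
Qed.

Lemma scott_open_basic F : scott_open (scott_basic F).
Proof. intros A HA. now exists F. Qed.

Lemma scott_open_mem n : scott_open (fun y : Pomega => y n).
Proof.
  intros A HA. exists (n :: nil). split.
  - intros m [<-|[]]; auto.
  - intros B HB. apply HB. now left.
Qed.

Lemma scott_open_comap (g : nat -> nat) W :
  scott_open W -> scott_open (fun y : Pomega => W (fun m => y (g m))).
Proof.
  intros HW A HA. destruct (HW _ HA) as [F [HF1 HF2]]. exists (map g F). split.
  - intros n Hn. apply in_map_iff in Hn as [m [<- Hm]]. auto.
  - intros B HB. apply HF2. intros m Hm. apply HB, in_map, Hm.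
Qed.

Lemma Sigma02_comap (g : nat -> nat) Z :
  Sigma02 scott_open Z -> Sigma02 scott_open (fun y : Pomega => Z (fun m => y (g m))).
Proof.
  intros [U [V [HU [HV HZ]]]].
  exists (fun n y => U n (fun m => y (g m))), (fun n y => V n (fun m => y (g m))).
  split; [|split]; try (intro; now apply scott_open_comap).
  intro y. apply HZ.
Qed.

Lemma Pi02_comap (g : nat -> nat) Z :
  Pi02 scott_open Z -> Pi02 scott_open (fun y : Pomega => Z (fun m => y (g m))).
Proof. exact (Sigma02_comap g (fun y => ~ Z y)). Qed.

Lemma scott_open_as_union W y : scott_open W ->
  W y <-> exists n, scott_basic (list_decode n) y /\
                    forall z, scott_basic (list_decode n) z -> W z.
Proof.
  intro HW. split.
  - intro Hy. destruct (HW y Hy) as [F HF]. exists (list_code F).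
    now rewrite list_decode_code.
  - intros [n [H1 H2]]. auto.
Qed.

Lemma wf_minimal {T : Type} (r : T -> T -> Prop) (Q : T -> Prop) :
  well_founded r -> (exists x, Q x) -> exists c, Q c /\ forall d, r d c -> ~ Q d.
Proof.
  intros Hw [x Hx]. revert Hx. induction x as [x IH] using (well_founded_ind Hw).
  intro Hx. destruct (classic (exists d, r d x /\ Q d)) as [[d [Hd1 Hd2]]|Hn].
  - exact (IH d Hd1 Hd2).
  - exists x. split; auto. intros d Hd HQ. apply Hn; eauto.
Qed.

Section Ordinals.
Variable R : nat -> nat -> Prop.
Hypothesis HR : nat_wellorder R.

Lemma ord_irrefl a : ~ R a a.
Proof. apply HR. Qed.

Lemma ord_trans a b c : R a b -> R b c -> R a c.
Proof. apply HR. Qed.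

Lemma ord_total a b : a <> b -> R a b \/ R b a.
Proof. apply HR. Qed.

Lemma ord_wf : well_founded R.
Proof. apply HR. Qed.

Lemma ord_cases a : ord_is0 R a \/ ord_is1 R a \/ ord_is2 R a \/ ord_gt2 R a.
Proof.
  destruct (classic (ord_is0 R a)) as [H|H]; [auto|].
  apply not_all_ex_not in H as [b1 Hb1]. apply NNPP in Hb1.
  destruct (classic (forall c, R c a -> c = b1)) as [H1|H1].
  { right; left. now exists b1. }
  apply not_all_ex_not in H1 as [b2 Hb2]. apply imply_to_and in Hb2 as [Hb2 Hne].
  destruct (classic (forall c, R c a -> c = b1 \/ c = b2)) as [H2|H2].
  { right; right; left. now exists b1, b2. }
  apply not_all_ex_not in H2 as [b3 Hb3]. apply imply_to_and in Hb3 as [Hb3 Hne3].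
  right; right; right. exists b1, b2, b3. repeat split; auto; intro; subst; tauto.
Qed.

Lemma ord_is0_is1 a : ord_is0 R a -> ord_is1 R a -> False.
Proof. intros H [b [Hb _]]. exact (H b Hb). Qed.

Lemma ord_is0_is2 a : ord_is0 R a -> ord_is2 R a -> False.
Proof. intros H [b [_ [_ [Hb _]]]]. exact (H b Hb). Qed.

Lemma ord_is0_gt2 a : ord_is0 R a -> ord_gt2 R a -> False.
Proof. intros H [b [_ [_ [_ [_ [_ [Hb _]]]]]]]. exact (H b Hb). Qed.

Lemma ord_is1_is2 a : ord_is1 R a -> ord_is2 R a -> False.
Proof.
  intros [b [_ Hu]] [b1 [b2 [Hne [H1 [H2 _]]]]].
  apply Hne. now rewrite (Hu _ H1), (Hu _ H2).
Qed.

Lemma ord_is1_gt2 a : ord_is1 R a -> ord_gt2 R a -> False.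
Proof.
  intros [b [_ Hu]] [b1 [b2 [b3 [Hne [_ [_ [H1 [H2 _]]]]]]]].
  apply Hne. now rewrite (Hu _ H1), (Hu _ H2).
Qed.

Lemma ord_is2_gt2 a : ord_is2 R a -> ord_gt2 R a -> False.
Proof.
  intros [c1 [c2 [_ [_ [_ Hu]]]]] [b1 [b2 [b3 [H12 [H13 [H23 [H1 [H2 H3]]]]]]]].
  destruct (Hu _ H1), (Hu _ H2), (Hu _ H3); subst; tauto.
Qed.

Lemma ord_is1_pred a b : ord_is1 R b -> R a b -> ord_is0 R a.
Proof.
  intros [b0 [_ Hu]] Hab c Hc. pose proof (Hu _ Hab); subst.
  pose proof (Hu _ (ord_trans _ _ _ Hc Hab)); subst. exact (ord_irrefl _ Hc).
Qed.

Lemma ord_is2_pred a b : ord_is2 R b -> R a b -> ord_is0 R a \/ ord_is1 R a.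
Proof.
  intros Hb Hab. destruct (ord_cases a) as [H|[H|[H|H]]]; auto; exfalso;
    apply (ord_is2_gt2 b); auto.
  - destruct H as [c1 [c2 [Hne [H1 [H2 _]]]]]. exists c1, c2, a.
    repeat split; eauto using ord_trans; intro; subst; eapply ord_irrefl; eauto.
  - destruct H as [c1 [c2 [_ [H12 [_ [_ [H1 [H2 _]]]]]]]]. exists c1, c2, a.
    repeat split; eauto using ord_trans; intro; subst; eapply ord_irrefl; eauto.
Qed.

Lemma three_distinct_top b1 b2 b3 : b1 <> b2 -> b1 <> b3 -> b2 <> b3 ->
  exists m d1 d2, d1 <> d2 /\ R d1 m /\ R d2 m /\ (m = b1 \/ m = b2 \/ m = b3).
Proof.
  intros H12 H13 H23.
  destruct (ord_total _ _ H12), (ord_total _ _ H13), (ord_total _ _ H23).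
  all: first
   [ exists b3, b1, b2; repeat split; auto; eauto using ord_trans; fail
   | exists b2, b1, b3; repeat split; auto; eauto using ord_trans; fail
   | exists b1, b2, b3; repeat split; auto; eauto using ord_trans; fail
   | exfalso; eapply ord_irrefl; eauto using ord_trans ].
Qed.

(* The least element below [b] with two predecessors denotes the ordinal 2. *)
Lemma ord_gt2_above_is2 b : ord_gt2 R b -> exists c, ord_is2 R c /\ R c b.
Proof.
  intros [b1 [b2 [b3 [H12 [H13 [H23 [H1 [H2 H3]]]]]]]].
  destruct (wf_minimal R (fun d => R d b /\ exists d1 d2, d1 <> d2 /\ R d1 d /\ R d2 d)
    ord_wf) as [c [[Hcb [d1 [d2 [Hn [Hd1 Hd2]]]]] Hmin]].
  { destruct (three_distinct_top _ _ _ H12 H13 H23) as [m [d1 [d2 [Hn [Hd1 [Hd2 Hm]]]]]].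
    exists m. split; [destruct Hm as [->|[->| ->]]; auto | eauto]. }
  exists c. split; auto. exists d1, d2. repeat split; auto.
  intros e He. apply NNPP. intro Hne. apply not_or_and in Hne as [He1 He2].
  destruct (three_distinct_top _ _ _ Hn (not_eq_sym He1) (not_eq_sym He2))
    as [m [f1 [f2 [Hf [Hf1 [Hf2 Hm]]]]]].
  assert (Hmc : R m c) by (destruct Hm as [->|[->| ->]]; auto).
  apply (Hmin m Hmc). split; eauto using ord_trans.
Qed.

Lemma ord_not0_pred a : ~ ord_is0 R a -> exists b, R b a.
Proof.
  intro H. apply not_all_ex_not in H as [b Hb]. apply NNPP in Hb. eauto.
Qed.

Lemma ord_succ_ge2 th th1 : ~ ord_is0 R th -> ord_succ R th th1 ->
  ord_is2 R th1 \/ ord_gt2 R th1.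
Proof.
  intros H0 [Hs _]. destruct (ord_not0_pred th H0) as [b Hb].
  destruct (ord_cases th1) as [H|[H|H]]; auto; exfalso.
  - exact (H th Hs).
  - destruct H as [c [_ Hu]].
    rewrite (Hu b (ord_trans _ _ _ Hb Hs)), <- (Hu th Hs) in Hb. exact (ord_irrefl _ Hb).
Qed.

End Ordinals.

Ltac ord_contra :=
  exfalso; first
  [ eapply ord_is0_is1; eassumption | eapply ord_is0_is2; eassumption
  | eapply ord_is0_gt2; eassumption | eapply ord_is1_is2; eassumption
  | eapply ord_is1_gt2; eassumption | eapply ord_is2_gt2; eassumption ].

Section BorelHierarchy.
Variable X : Type.
Variable opn : (X -> Prop) -> Prop.
Hypothesis Hop : open_family opn.
Variable R : nat -> nat -> Prop.
Hypothesis HR : nat_wellorder R.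

Notation Sg := (Sigma0 opn R).

Lemma Sigma0_is0_inv a A : ord_is0 R a -> Sg a A -> forall x, ~ A x.
Proof. intros Ha HA. inversion HA; subst; auto; ord_contra. Qed.

Lemma Sigma0_is1_inv a A : ord_is1 R a -> Sg a A -> opn A.
Proof. intros Ha HA. inversion HA; subst; auto; ord_contra. Qed.

Lemma Sigma0_is2_inv a A : ord_is2 R a -> Sg a A -> Sigma02 opn A.
Proof. intros Ha HA. inversion HA; subst; auto; ord_contra. Qed.

Lemma Sigma0_gt2_inv a A : ord_gt2 R a -> Sg a A -> exists B : nat -> X -> Prop,
  (forall n, exists b, R b a /\ Sg b (B n)) /\ (forall x, A x <-> exists n, ~ B n x).
Proof. intros Ha HA. inversion HA; subst; eauto; ord_contra. Qed.

Lemma Sigma0_gt2_of_Sigma02 c a A :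
  ord_is2 R c -> R c a -> ord_gt2 R a -> Sigma02 opn A -> Sg a A.
Proof.
  intros Hc Hca Ha [U [V [HU [HV HA]]]].
  apply (Sigma0_gt2 _ _ a A (fun n x => ~ U n x \/ V n x)); auto.
  - intro n. exists c. split; auto. apply Sigma0_two; auto.
    apply Sigma02_or, Sigma02_open; auto. now apply Sigma02_copen.
  - intro x. rewrite HA. split; intros [n Hn]; exists n; [tauto|].
    apply not_or_and in Hn. split; [apply NNPP|]; tauto.
Qed.

Lemma Sigma0_open a U : ~ ord_is0 R a -> opn U -> Sg a U.
Proof.
  intros Ha HU. destruct (ord_cases R a) as [H|[H|[H|H]]].
  - tauto.
  - now apply Sigma0_one.
  - now apply Sigma0_two, Sigma02_open.
  - destruct (ord_gt2_above_is2 R HR a H) as [c [Hc Hca]].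
    apply (Sigma0_gt2_of_Sigma02 c); auto. now apply Sigma02_open.
Qed.

Lemma Sigma0_full a : ~ ord_is0 R a -> Sg a (fun _ => True).
Proof. intro Ha. now apply Sigma0_open, open_full. Qed.

Lemma Sigma0_empty a : Sg a (fun _ => False).
Proof.
  destruct (classic (ord_is0 R a)).
  - now apply Sigma0_zero.
  - now apply Sigma0_open, open_empty.
Qed.

Lemma Sigma0_mono a b A : R a b -> Sg a A -> Sg b A.
Proof.
  intros Hab HA.
  assert (Hempty : ord_is0 R a -> Sg b A).
  { intro Ha. apply (pred_transport _ (fun _ => False)); [|apply Sigma0_empty].
    pose proof (Sigma0_is0_inv a A Ha HA). firstorder. }
  destruct (ord_cases R b) as [Hb|[Hb|[Hb|Hb]]].
  - exfalso; exact (Hb a Hab).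
  - exact (Hempty (ord_is1_pred R HR _ _ Hb Hab)).
  - destruct (ord_is2_pred R HR _ _ Hb Hab) as [Ha|Ha]; auto.
    apply Sigma0_two, Sigma02_open, (Sigma0_is1_inv a); auto.
  - destruct (ord_cases R a) as [Ha|[Ha|[Ha|Ha]]]; auto.
    + destruct (ord_gt2_above_is2 R HR b Hb) as [c [Hc Hcb]].
      apply (Sigma0_gt2_of_Sigma02 c); auto.
      apply Sigma02_open, (Sigma0_is1_inv a); auto.
    + apply (Sigma0_gt2_of_Sigma02 a); auto. now apply (Sigma0_is2_inv a).
    + destruct (Sigma0_gt2_inv _ _ Ha HA) as [B [HB HAe]].
      apply (Sigma0_gt2 _ _ b A B); auto.
      intro n. destruct (HB n) as [c [Hc HBc]]. exists c. split; auto.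
      now apply (ord_trans R HR _ a).
Qed.

Lemma Sigma0_le a b A : (a = b \/ R a b) -> Sg a A -> Sg b A.
Proof. intros [->|H]; auto. now apply Sigma0_mono. Qed.

Lemma Sigma0_compl a b A : R a b -> Sg a A -> Sg b (fun x => ~ A x).
Proof.
  intros Hab HA.
  assert (Hfull : ord_is0 R a -> Sg b (fun x => ~ A x)).
  { intro Ha. apply (pred_transport _ (fun _ => True)).
    - pose proof (Sigma0_is0_inv a A Ha HA). firstorder.
    - apply Sigma0_full. intro H0. exact (H0 a Hab). }
  destruct (ord_cases R b) as [Hb|[Hb|[Hb|Hb]]].
  - exfalso; exact (Hb a Hab).
  - exact (Hfull (ord_is1_pred R HR _ _ Hb Hab)).
  - destruct (ord_is2_pred R HR _ _ Hb Hab) as [Ha|Ha]; auto.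
    apply Sigma0_two, Sigma02_copen, (Sigma0_is1_inv a); auto.
  - apply (Sigma0_gt2 _ _ b _ (fun _ => A)); eauto.
    intro x. split; [now exists 0 | now intros [_ H]].
Qed.

Lemma Sigma0_ex a (A : nat -> X -> Prop) :
  (forall n, Sg a (A n)) -> Sg a (fun x => exists n, A n x).
Proof.
  intros HA. destruct (ord_cases R a) as [Ha|[Ha|[Ha|Ha]]].
  - apply Sigma0_zero; auto. intros x [n Hn]. exact (Sigma0_is0_inv a _ Ha (HA n) x Hn).
  - apply Sigma0_one, open_ex; auto. intro n. exact (Sigma0_is1_inv a _ Ha (HA n)).
  - apply Sigma0_two, Sigma02_ex; auto. intro n. exact (Sigma0_is2_inv a _ Ha (HA n)).
  - destruct (functional_choice (fun n (B : nat -> X -> Prop) =>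
      (forall m, exists b, R b a /\ Sg b (B m)) /\ (forall x, A n x <-> exists m, ~ B m x)))
      as [B HB].
    { intro n. apply Sigma0_gt2_inv; auto. }
    apply (Sigma0_gt2 _ _ a _ (fun p => B (unpair1 p) (unpair2 p))); auto.
    + intro p. apply HB.
    + intro x. rewrite <- (ex2_as_ex (fun n m x => ~ B n m x)).
      split; intros [n Hn]; exists n; now apply HB.
Qed.

Lemma Sigma0_or a A B : Sg a A -> Sg a B -> Sg a (fun x => A x \/ B x).
Proof.
  intros HA HB. apply (pred_transport _ _ _ (fun x => iff_sym (or_as_ex A B x))).
  apply Sigma0_ex. now intros [|n].
Qed.

Lemma Sigma0_and a A B : Sg a A -> Sg a B -> Sg a (fun x => A x /\ B x).
Proof.
  intros HA HB. destruct (ord_cases R a) as [Ha|[Ha|[Ha|Ha]]].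
  - apply Sigma0_zero; auto. intros x [H _]. exact (Sigma0_is0_inv a A Ha HA x H).
  - apply Sigma0_one, open_and; eauto using Sigma0_is1_inv.
  - apply Sigma0_two, Sigma02_and; eauto using Sigma0_is2_inv.
  - destruct (Sigma0_gt2_inv _ _ Ha HA) as [C [HC HAe]].
    destruct (Sigma0_gt2_inv _ _ Ha HB) as [D [HD HBe]].
    apply (Sigma0_gt2 _ _ a _ (fun p x => C (unpair1 p) x \/ D (unpair2 p) x)); auto.
    + intro p. destruct (HC (unpair1 p)) as [c [Hc HCc]].
      destruct (HD (unpair2 p)) as [d [Hd HDd]].
      destruct (classic (c = d)) as [<-|Hne]; [exists c; split; [auto | now apply Sigma0_or]|].
      destruct (ord_total R HR _ _ Hne);
        [exists d | exists c]; split; auto; apply Sigma0_or; eauto using Sigma0_mono.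
    + intro x. rewrite HAe, HBe, <- (ex2_as_ex (fun n m x => ~ (C n x \/ D m x))).
      split.
      * intros [[n Hn] [m Hm]]. exists n, m. tauto.
      * intros [n [m Hnm]]. apply not_or_and in Hnm. split; eexists; apply Hnm.
Qed.

Lemma Sigma0_guard (Pr : Prop) a A : (Pr -> Sg a A) -> Sg a (fun x => Pr /\ A x).
Proof.
  intro H. destruct (classic Pr) as [HP|HP].
  - apply (pred_transport _ A); [intro; tauto | auto].
  - apply (pred_transport _ (fun _ => False)); [intro; tauto | now apply Sigma0_empty].
Qed.

Lemma Sigma0_ex_countable (P : Type) (e : P -> nat) a (B : P -> X -> Prop) :
  (forall p q, e p = e q -> p = q) -> (forall p, Sg a (B p)) ->
  Sg a (fun x => exists p, B p x).
Proof.
  intros He HB.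
  apply (pred_transport _ (fun x => exists m, exists p, e p = m /\ B p x)).
  - intro x. split; [intros [m [p [_ Hp]]] | intros [p Hp]; exists (e p)]; eauto.
  - apply Sigma0_ex; auto. intro m.
    destruct (classic (exists p, e p = m)) as [[p <-]|Hn].
    + apply (pred_transport _ (B p)); auto. intro x. split; [eauto|].
      intros [q [Hq Hb]]. now rewrite <- (He _ _ Hq).
    + apply (pred_transport _ (fun _ => False)); [|now apply Sigma0_empty].
      intro x. split; [tauto|]. intros [p [Hp _]]. eauto.
Qed.

End BorelHierarchy.

(* A countable family [G] of extra open sets on a quasi-Polish [X], presented by
   [f : X -> Pomega], is encoded by the embedding whose even coordinates are [f x]
   and whose odd coordinates record membership of [x] in the [G n]. *)
Section Refinement.
Variable X : Type.
Variable opn : (X -> Prop) -> Prop.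
Variable f : X -> Pomega.
Variable S : Pomega -> Prop.
Hypothesis Hinj : forall x y, f x = f y -> x = y.
Hypothesis HS : Pi02 scott_open S.
Hypothesis Himg : forall y, S y <-> exists x, f x = y.
Hypothesis Hopn : forall U, opn U <-> exists W, scott_open W /\ forall x, U x <-> W (f x).
Variable R : nat -> nat -> Prop.
Hypothesis HR : nat_wellorder R.

Notation Sg := (Sigma0 opn R).

Lemma open_family_induced : open_family opn.
Proof.
  split.
  - intros U V HU HV. apply Hopn in HU as [W1 [H1 H1']], HV as [W2 [H2 H2']].
    apply Hopn. exists (fun y => W1 y /\ W2 y).
    split; [now apply scott_open_family|]. intro x. now rewrite H1', H2'.
  - intros U HU. apply Hopn.
    destruct (functional_choice (fun n W => scott_open W /\ forall x, U n x <-> W (f x)))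
      as [W HW]; [intro n; now apply Hopn|].
    exists (fun y => exists n, W n y). split; [apply scott_open_family; intro; apply HW|].
    intro x. split; intros [n Hn]; exists n; now apply HW.
  - apply Hopn. exists (fun _ => True). split; [apply scott_open_family | tauto].
  - apply Hopn. exists (fun _ => False). split; [apply scott_open_family | tauto].
Qed.

Definition refine_embed (G : nat -> X -> Prop) (x : X) : Pomega :=
  interleave (f x) (fun n => G n x).

Definition qp_refinement (G : nat -> X -> Prop) : Prop :=
  Pi02 scott_open (fun y => exists x, refine_embed G x = y).

Definition refine_open (G : nat -> X -> Prop) (C : X -> Prop) : Prop :=
  exists W, scott_open W /\ forall x, C x <-> W (refine_embed G x).

Definition refine_Delta02 (G : nat -> X -> Prop) (C : X -> Prop) : Prop :=
  (exists Z, Sigma02 scott_open Z /\ forall x, C x <-> Z (refine_embed G x)) /\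
  (exists Z, Sigma02 scott_open Z /\ forall x, ~ C x <-> Z (refine_embed G x)).

Definition empty_family : nat -> X -> Prop := fun _ _ => False.

Lemma refine_embed_even G x m : refine_embed G x (2 * m) = f x m.
Proof. apply interleave_even. Qed.

Lemma refine_embed_odd G x m : refine_embed G x (2 * m + 1) = G m x.
Proof. apply (interleave_odd (f x) (fun n => G n x)). Qed.

Lemma f_refine_embed G x : f x = (fun m => refine_embed G x (2 * m)).
Proof. apply pred_ext. intro m. now rewrite refine_embed_even. Qed.

Lemma refine_embed_eq G x y : (forall m, f x m <-> y (2 * m)) ->
  (forall n, G n x <-> y (2 * n + 1)) -> refine_embed G x = y.
Proof.
  intros H1 H2. apply pred_ext. intro m.
  destruct (Nat.Even_or_Odd m) as [[k ->]|[k ->]].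
  - now rewrite refine_embed_even.
  - now rewrite refine_embed_odd.
Qed.

Lemma qp_refinement_empty : qp_refinement empty_family.
Proof.
  unfold qp_refinement.
  apply (pred_transport _ (fun y => S (fun m => y (2 * m)) /\ forall n, ~ y (2 * n + 1))).
  - intro y. split.
    + intros [HSy Hn]. apply Himg in HSy as [x Hx]. exists x. apply refine_embed_eq.
      * intro m. now rewrite Hx.
      * intro n. unfold empty_family. split; [tauto | apply Hn].
    + intros [x <-]. split.
      * apply Himg. exists x. apply f_refine_embed.
      * intro n. now rewrite refine_embed_odd.
  - apply Pi02_and; [now apply (Pi02_comap (fun m => 2 * m))|].
    apply Pi02_all. intro n.
    apply Pi02_not, (Sigma02_open _ scott_open_family), scott_open_mem.
Qed.

Definition idx_left (m : nat) : nat :=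
  if Nat.even m then m else 2 * (2 * Nat.div2 m) + 1.

Lemma refine_embed_left G H x :
  (fun m => refine_embed (interleave G H) x (idx_left m)) = refine_embed G x.
Proof.
  apply pred_ext. intro m. unfold idx_left.
  destruct (Nat.Even_or_Odd m) as [[k ->]|[k ->]].
  - now rewrite Nat.even_even, !refine_embed_even.
  - rewrite Nat.even_odd, Nat.div2_odd', !refine_embed_odd. now rewrite interleave_even.
Qed.

Definition union_family (Gs : nat -> nat -> X -> Prop) : nat -> X -> Prop :=
  fun n => Gs (unpair1 n) (unpair2 n).

Definition idx_union (j m : nat) : nat :=
  if Nat.even m then m else 2 * (pairn j (Nat.div2 m)) + 1.

Lemma refine_embed_union Gs j x :
  (fun m => refine_embed (union_family Gs) x (idx_union j m)) = refine_embed (Gs j) x.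
Proof.
  apply pred_ext. intro m. unfold idx_union.
  destruct (Nat.Even_or_Odd m) as [[k ->]|[k ->]].
  - now rewrite Nat.even_even, !refine_embed_even.
  - rewrite Nat.even_odd, Nat.div2_odd', !refine_embed_odd. unfold union_family.
    now rewrite unpair1_pair, unpair2_pair.
Qed.

Lemma qp_refinement_add G H : qp_refinement G -> (forall n, refine_Delta02 G (H n)) ->
  qp_refinement (interleave G H).
Proof.
  intros HG HH.
  destruct (functional_choice (fun n (ZZ : (Pomega -> Prop) * (Pomega -> Prop)) =>
    (Sigma02 scott_open (fst ZZ) /\ forall x, H n x <-> fst ZZ (refine_embed G x)) /\
    (Sigma02 scott_open (snd ZZ) /\ forall x, ~ H n x <-> snd ZZ (refine_embed G x))))
    as [ZZ HZ].
  { intro n. destruct (HH n) as [[Z1 H1] [Z2 H2]]. now exists (Z1, Z2). }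
  set (left := fun (y : Pomega) m => y (idx_left m)).
  unfold qp_refinement. apply (pred_transport _ (fun y =>
    (exists x, refine_embed G x = left y) /\
     forall n, ~ (y (2 * (2 * n + 1) + 1) /\ snd (ZZ n) (left y)) /\
               ~ (~ y (2 * (2 * n + 1) + 1) /\ fst (ZZ n) (left y)))).
  - intro y. split.
    + intros [[x Hx] Hn]. exists x.
      assert (Hcoord : forall m, refine_embed G x m <-> y (idx_left m)) by now rewrite Hx.
      apply refine_embed_eq.
      * intro m. rewrite <- refine_embed_even with (G := G), Hcoord.
        unfold idx_left. now rewrite Nat.even_even.
      * intro n. destruct (Nat.Even_or_Odd n) as [[k ->]|[k ->]].
        -- rewrite interleave_even, <- refine_embed_odd, Hcoord.
           unfold idx_left. now rewrite Nat.even_odd, Nat.div2_odd'.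
        -- rewrite interleave_odd. destruct (Hn k) as [N1 N2], (HZ k) as [[_ A1] [_ A2]].
           rewrite <- Hx, <- A2 in N1. rewrite <- Hx, <- A1 in N2. tauto.
    + intros [x <-]. unfold left. rewrite refine_embed_left. split; [eauto|].
      intro n. rewrite refine_embed_odd, interleave_odd.
      destruct (HZ n) as [[_ A1] [_ A2]]. rewrite <- A1, <- A2. tauto.
  - apply Pi02_and.
    { exact (Pi02_comap idx_left (fun z => exists x, refine_embed G x = z) HG). }
    apply Pi02_all. intro n.
    apply Pi02_and; apply Pi02_not, (Sigma02_and _ scott_open_family).
    + apply (Sigma02_open _ scott_open_family), scott_open_mem.
    + apply Sigma02_comap, HZ.
    + apply (Sigma02_copen _ scott_open_family), scott_open_mem.
    + apply Sigma02_comap, HZ.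
Qed.

(* Injectivity of [f] makes all the coordinate blocks of a point of the image
   come from the same [x]. *)
Lemma qp_refinement_union Gs : (forall j, qp_refinement (Gs j)) ->
  qp_refinement (union_family Gs).
Proof.
  intro HG. unfold qp_refinement.
  apply (pred_transport _ (fun y =>
    forall j, exists x, refine_embed (Gs j) x = (fun m => y (idx_union j m)))).
  - intro y. split; [|intros [x <-] j; exists x; now rewrite refine_embed_union].
    intro Hj.
    assert (Hf : forall j x, refine_embed (Gs j) x = (fun m => y (idx_union j m)) ->
              forall m, f x m <-> y (2 * m)).
    { intros j x Hx m. rewrite <- refine_embed_even with (G := Gs j), Hx.
      unfold idx_union. now rewrite Nat.even_even. }
    destruct (Hj 0) as [x0 Hx0]. exists x0. apply refine_embed_eq; [exact (Hf 0 x0 Hx0)|].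
    intro n. destruct (Hj (unpair1 n)) as [xj Hxj].
    replace xj with x0 in Hxj.
    + unfold union_family. rewrite <- refine_embed_odd with (G := Gs (unpair1 n)), Hxj.
      unfold idx_union. now rewrite Nat.even_odd, Nat.div2_odd', pair_unpair.
    + apply Hinj, pred_ext. intro m. now rewrite (Hf _ _ Hx0), (Hf _ _ Hxj).
  - apply Pi02_all. intro j.
    exact (Pi02_comap (idx_union j) (fun z => exists x, refine_embed (Gs j) x = z) (HG j)).
Qed.

Lemma refine_open_old G U : opn U -> refine_open G U.
Proof.
  intro HU. apply Hopn in HU as [W [HW HU]].
  exists (fun y => W (fun m => y (2 * m))). split; [now apply scott_open_comap|].
  intro x. now rewrite HU, (f_refine_embed G x).
Qed.

Lemma refine_open_new G n : refine_open G (G n).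
Proof.
  exists (fun y => y (2 * n + 1)). split; [apply scott_open_mem|].
  intro x. now rewrite refine_embed_odd.
Qed.

Lemma refine_open_union Gs j C : refine_open (Gs j) C -> refine_open (union_family Gs) C.
Proof.
  intros [W [HW HC]]. exists (fun y => W (fun m => y (idx_union j m))).
  split; [now apply scott_open_comap|]. intro x. now rewrite refine_embed_union.
Qed.

Lemma refine_open_left G H C : refine_open G C -> refine_open (interleave G H) C.
Proof.
  intros [W [HW HC]]. exists (fun y => W (fun m => y (idx_left m))).
  split; [now apply scott_open_comap|]. intro x. now rewrite refine_embed_left.
Qed.

Lemma refine_open_ex G (C : nat -> X -> Prop) :
  (forall n, refine_open G (C n)) -> refine_open G (fun x => exists n, C n x).
Proof.
  intro H. apply functional_choice in H as [W HW].
  exists (fun y => exists n, W n y). split; [apply scott_open_family; intro; apply HW|].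
  intro x. split; intros [n Hn]; exists n; now apply HW.
Qed.

Lemma refine_open_and G C D :
  refine_open G C -> refine_open G D -> refine_open G (fun x => C x /\ D x).
Proof.
  intros [W [HW HC]] [W' [HW' HD]]. exists (fun y => W y /\ W' y).
  split; [now apply scott_open_family|]. intro x. now rewrite HC, HD.
Qed.

Lemma refine_Delta02_compl G C : refine_open G C -> refine_Delta02 G (fun x => ~ C x).
Proof.
  intros [W [HW HC]]. split.
  - exists (fun y => ~ W y). split; [now apply (Sigma02_copen _ scott_open_family)|].
    intro x. now rewrite HC.
  - exists W. split; [now apply (Sigma02_open _ scott_open_family)|].
    intro x. rewrite HC. split; [apply NNPP | tauto].
Qed.

Lemma refine_add_compl G H : qp_refinement G -> (forall p, refine_open G (H p)) ->
  qp_refinement (interleave G (fun p x => ~ H p x)) /\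
  forall p, refine_open (interleave G (fun p x => ~ H p x)) (fun x => ~ H p x).
Proof.
  intros HG HH. split.
  - apply qp_refinement_add; auto. intro p. now apply refine_Delta02_compl.
  - intro p. apply (pred_transport _ (interleave G (fun p x => ~ H p x) (2 * p + 1))).
    + intro x. now rewrite interleave_odd.
    + apply refine_open_new.
Qed.

Definition refines (th : nat) (C : nat -> X -> Prop) (G : nat -> X -> Prop) : Prop :=
  qp_refinement G /\ (forall n, Sg th (G n)) /\ forall j, refine_open G (C j).

Lemma refines_opens th C : (forall j, opn (C j)) -> refines th C empty_family.
Proof.
  intro HC. split; [apply qp_refinement_empty|split].
  - intro n. apply (Sigma0_empty X opn open_family_induced R HR).
  - intro j. now apply refine_open_old.
Qed.

Lemma refines_is2 th C : ord_is2 R th -> (forall j, Sg th (C j)) ->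
  exists G, refines th C G.
Proof.
  intros Hth HC.
  destruct (functional_choice (fun j (UV : (nat -> X -> Prop) * (nat -> X -> Prop)) =>
    (forall m, opn (fst UV m)) /\ (forall m, opn (snd UV m)) /\
    (forall x, C j x <-> exists m, fst UV m x /\ ~ snd UV m x))) as [UV HUV].
  { intro j. destruct (Sigma0_is2_inv X opn R th (C j) Hth (HC j)) as [U [V H]].
    now exists (U, V). }
  set (V := fun p => snd (UV (unpair1 p)) (unpair2 p)).
  destruct (refine_add_compl empty_family V qp_refinement_empty) as [HQ HV].
  { intro p. apply refine_open_old, HUV. }
  exists (interleave empty_family (fun p x => ~ V p x)). split; [|split]; auto.
  - intro n. destruct (Nat.Even_or_Odd n) as [[m ->]|[m ->]];
      [rewrite interleave_even | rewrite interleave_odd]; apply Sigma0_two; auto.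
    + apply (Sigma02_open _ open_family_induced), open_empty, open_family_induced.
    + apply (Sigma02_copen _ open_family_induced), HUV.
  - intro j. apply (pred_transport _ (fun x => exists m, fst (UV j) m x /\ ~ V (pairn j m) x)).
    + intro x. rewrite (proj2 (proj2 (HUV j))). unfold V.
      now setoid_rewrite unpair1_pair; setoid_rewrite unpair2_pair.
    + apply refine_open_ex. intro m. apply refine_open_and; [|apply HV].
      apply refine_open_left, refine_open_old, HUV.
Qed.

Lemma refines_gt2 th C : ord_gt2 R th ->
  (forall b, R b th -> forall C', (forall j, Sg b (C' j)) -> exists G, refines b C' G) ->
  (forall j, Sg th (C j)) -> exists G, refines th C G.
Proof.
  intros Hth IH HC.
  destruct (functional_choice (fun j (B : nat -> X -> Prop) =>
    (forall n, exists b, R b th /\ Sg b (B n)) /\ (forall x, C j x <-> exists n, ~ B n x)))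
    as [B HB].
  { intro j. now apply Sigma0_gt2_inv. }
  set (Bp := fun p => B (unpair1 p) (unpair2 p)).
  destruct (functional_choice (fun p b => R b th /\ Sg b (Bp p))) as [b Hb].
  { intro p. apply HB. }
  destruct (functional_choice (fun p G => refines (b p) (fun _ => Bp p) G)) as [Gs HGs].
  { intro p. apply (IH (b p)); [apply Hb | intro; apply Hb]. }
  destruct (refine_add_compl (union_family Gs) Bp) as [HQ HBp].
  { apply qp_refinement_union. intro p. apply HGs. }
  { intro p. apply (refine_open_union Gs p), (HGs p), 0. }
  exists (interleave (union_family Gs) (fun p x => ~ Bp p x)). split; [|split]; auto.
  - intro n. destruct (Nat.Even_or_Odd n) as [[m ->]|[m ->]];
      [rewrite interleave_even | rewrite interleave_odd].
    + apply (Sigma0_mono X opn open_family_induced R HR (b (unpair1 m))); apply Hb || apply HGs.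
    + apply (Sigma0_compl X opn open_family_induced R HR (b m)); apply Hb.
  - intro j. apply (pred_transport _ (fun x => exists n, ~ Bp (pairn j n) x)).
    + intro x. rewrite (proj2 (HB j)). unfold Bp.
      now setoid_rewrite unpair1_pair; setoid_rewrite unpair2_pair.
    + apply refine_open_ex. intro n. apply HBp.
Qed.

Lemma refine_Sigma0 th C : (forall j, Sg th (C j)) -> exists G, refines th C G.
Proof.
  revert C. induction th as [th IH] using (well_founded_ind (ord_wf R HR)).
  intros C HC. destruct (ord_cases R th) as [Hth|[Hth|[Hth|Hth]]].
  - exists empty_family. apply refines_opens. intro j.
    apply (pred_transport _ (fun _ => False)); [|apply open_family_induced].
    pose proof (Sigma0_is0_inv X opn R th (C j) Hth (HC j)). firstorder.
  - exists empty_family. apply refines_opens. intro j.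
    exact (Sigma0_is1_inv X opn R th (C j) Hth (HC j)).
  - now apply refines_is2.
  - now apply refines_gt2.
Qed.

Lemma refine_basic_Sigma0 th G E : ~ ord_is0 R th -> (forall n, Sg th (G n)) ->
  Sg th (fun x => scott_basic E (refine_embed G x)).
Proof.
  intros Hth HG. induction E as [|a E IH].
  - apply (pred_transport _ (fun _ => True)).
    + intro x. split; [intros _ n []|auto].
    + now apply (Sigma0_full X opn open_family_induced R HR).
  - apply (pred_transport _ (fun x => refine_embed G x a /\ scott_basic E (refine_embed G x))).
    + intro x. symmetry. apply scott_basic_cons.
    + apply (Sigma0_and X opn open_family_induced R HR); auto.
      destruct (Nat.Even_or_Odd a) as [[m ->]|[m ->]].
      * apply (pred_transport _ (fun x => f x m)); [intro x; now rewrite refine_embed_even|].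
        apply (Sigma0_open X opn open_family_induced R HR); auto.
        apply Hopn. exists (fun y => y m). split; [apply scott_open_mem | tauto].
      * apply (pred_transport _ (G m)); [intro x; now rewrite refine_embed_odd | auto].
Qed.

Lemma refine_open_Sigma0 th G W : ~ ord_is0 R th -> (forall n, Sg th (G n)) ->
  scott_open W -> Sg th (fun x => W (refine_embed G x)).
Proof.
  intros Hth HG HW.
  apply (pred_transport _ (fun x => exists n, scott_basic (list_decode n) (refine_embed G x)
                                           /\ forall z, scott_basic (list_decode n) z -> W z)).
  - intro x. symmetry. now apply scott_open_as_union.
  - apply (Sigma0_ex X opn open_family_induced R). intro n.
    apply (pred_transport _ (fun x => (forall z, scott_basic (list_decode n) z -> W z) /\
                                      scott_basic (list_decode n) (refine_embed G x))).
    + intro x. tauto.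
    + apply (Sigma0_guard X opn open_family_induced R HR). intro.
      now apply refine_basic_Sigma0.
Qed.

End Refinement.

Section Baire.
Variables P Q U V : nat -> Pomega -> Prop.
Variable O : Pomega -> Prop.
Hypothesis HP : forall m, scott_open (P m).
Hypothesis HQ : forall m, scott_open (Q m).
Hypothesis HU : forall m, scott_open (U m).
Hypothesis HV : forall m, scott_open (V m).
Hypothesis HO : scott_open O.

Definition in_Z (y : Pomega) : Prop := (forall m, P m y -> Q m y) /\ ~ O y.

Definition meets_Z (E : list nat) : Prop := exists y, in_Z y /\ scott_basic E y.

Lemma Q_witness y j : exists F, scott_basic F y /\
  forall m, m <= j -> Q m y -> forall z, scott_basic F z -> Q m z.
Proof.
  induction j as [|j [F [HF1 HF2]]].
  - destruct (classic (Q 0 y)) as [H|H].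
    + destruct (HQ 0 y H) as [F [H1 H2]]. exists F. split; auto.
      intros m Hm. replace m with 0 by lia. auto.
    + exists nil. split; [intros n []|]. intros m Hm Hq. replace m with 0 in Hq by lia. tauto.
  - destruct (classic (Q (S j) y)) as [H|H].
    + destruct (HQ (S j) y H) as [F' [H1' H2']]. exists (F ++ F').
      split; [now apply scott_basic_app|].
      intros m Hm Hq z Hz. apply scott_basic_app in Hz as [Hz1 Hz2].
      destruct (Nat.eq_dec m (S j)) as [->|Hne]; auto. apply (HF2 m); auto. lia.
    + exists F. split; auto. intros m Hm Hq z Hz.
      destruct (Nat.eq_dec m (S j)) as [->|Hne]; [tauto|]. apply (HF2 m); auto. lia.
Qed.

(* The step of the Baire argument: shrink the basic set so as to keep the Pi^0_2
   conditions up to [j] and to leave [U j \ V j], using that [U j \ V j] has empty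
   interior in [Z]. *)
Lemma baire_step E j :
  (forall E n, meets_Z E -> exists z, in_Z z /\ scott_basic E z /\ ~ (U n z /\ ~ V n z)) ->
  meets_Z E -> exists E', meets_Z E' /\ incl E E' /\
    (forall m, m <= j -> (forall z, scott_basic E z -> P m z) ->
       forall z, scott_basic E' z -> Q m z) /\
    (forall z, in_Z z -> scott_basic E' z -> U j z -> V j z).
Proof.
  intros Hnowhere [y [Zy Ey]]. destruct (Q_witness y j) as [F [HF1 HF2]].
  assert (HQkeep : forall E', incl (E ++ F) E' -> forall m, m <= j ->
    (forall z, scott_basic E z -> P m z) -> forall z, scott_basic E' z -> Q m z).
  { intros E' HE' m Hm HPm z Hz. apply (HF2 m Hm).
    - apply Zy, HPm, Ey.
    - eapply scott_basic_incl, Hz. intros a Ha. apply HE', in_or_app; auto. }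
  destruct (classic (exists y', in_Z y' /\ scott_basic (E ++ F) y' /\ U j y'))
    as [[y' [Zy' [Ey' Uy']]]|Hno].
  - destruct (HU j y' Uy') as [Fu [Fu1 Fu2]].
    destruct (Hnowhere ((E ++ F) ++ Fu) j) as [z [Zz [Ez Nz]]].
    { exists y'. split; auto. now apply scott_basic_app. }
    apply scott_basic_app in Ez as [Ez1 Ez2].
    assert (Vz : V j z) by (apply NNPP; intro; apply Nz; auto).
    destruct (HV j z Vz) as [Fv [Fv1 Fv2]].
    exists (((E ++ F) ++ Fu) ++ Fv). split; [|split; [|split]].
    + exists z. split; auto. apply scott_basic_app. split; auto. now apply scott_basic_app.
    + intros a Ha. rewrite <- !app_assoc. apply in_or_app; auto.
    + apply HQkeep. intros a Ha. rewrite <- app_assoc. apply in_or_app; auto.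
    + intros x _ Hx _. apply Fv2. apply scott_basic_app in Hx. tauto.
  - exists (E ++ F). split; [|split; [|split]].
    + exists y. split; auto. now apply scott_basic_app.
    + intros a Ha. apply in_or_app; auto.
    + apply HQkeep, incl_refl.
    + intros x Zx Hx Ux. exfalso. apply Hno. eauto.
Qed.

Lemma incl_chain (Es : nat -> list nat) : (forall n, incl (Es n) (Es (S n))) ->
  forall n m, n <= m -> incl (Es n) (Es m).
Proof.
  intros H n m Hnm. induction Hnm; [apply incl_refl|]. eapply incl_tran; eauto.
Qed.

Lemma chain_limit_in_Z (Es : nat -> list nat) :
  (forall n, meets_Z (Es n)) -> (forall n, incl (Es n) (Es (S n))) ->
  (forall n m, m <= n -> (forall z, scott_basic (Es n) z -> P m z) ->
     forall z, scott_basic (Es (S n)) z -> Q m z) ->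
  in_Z (fun a => exists n, In a (Es n)) /\
  forall n, scott_basic (Es n) (fun a => exists n, In a (Es n)).
Proof.
  intros Hmeet Hinc HPQ. set (x := fun a => exists n, In a (Es n)).
  assert (Hx : forall n, scott_basic (Es n) x) by (intros n a Ha; now exists n).
  assert (Hfin : forall F, scott_basic F x -> exists N, incl F (Es N)).
  { induction F as [|a F IH]; intro H; [exists 0; intros b []|].
    apply scott_basic_cons in H as [[n1 Hn1] HF]. destruct (IH HF) as [n2 Hn2].
    exists (n1 + n2). intros b [<-|Hb].
    - apply (incl_chain Es Hinc n1); auto. lia.
    - apply (incl_chain Es Hinc n2); auto. lia. }
  split; auto. split.
  - intros m Pm. destruct (HP m x Pm) as [F [F1 F2]]. destruct (Hfin F F1) as [N HN].
    apply (HPQ (N + m) m); [lia| |apply Hx].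
    intros z Hz. apply F2. apply (scott_basic_incl F (Es (N + m))); auto.
    eapply incl_tran; [exact HN|]. apply incl_chain; auto. lia.
  - intro Ox. destruct (HO x Ox) as [F [F1 F2]]. destruct (Hfin F F1) as [N HN].
    destruct (Hmeet N) as [y [[_ Oy] Ey]]. apply Oy, F2.
    now apply (scott_basic_incl F (Es N)).
Qed.

Lemma baire_Sigma02_cover : (exists y, in_Z y) ->
  (forall y, in_Z y -> exists n, U n y /\ ~ V n y) ->
  exists E n, meets_Z E /\ forall y, in_Z y -> scott_basic E y -> U n y /\ ~ V n y.
Proof.
  intros [y0 Zy0] Hcov. apply NNPP. intro Hno.
  assert (Hnowhere : forall E n, meets_Z E ->
    exists z, in_Z z /\ scott_basic E z /\ ~ (U n z /\ ~ V n z)).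
  { intros E n HE. apply NNPP. intro H. apply Hno. exists E, n. split; auto.
    intros y Zy Ey. apply NNPP. intro H'. apply H. now exists y. }
  destruct (functional_choice (fun (jE : nat * list nat) E' => meets_Z (snd jE) ->
    meets_Z E' /\ incl (snd jE) E' /\
    (forall m, m <= fst jE -> (forall z, scott_basic (snd jE) z -> P m z) ->
       forall z, scott_basic E' z -> Q m z) /\
    (forall z, in_Z z -> scott_basic E' z -> U (fst jE) z -> V (fst jE) z)))
    as [next Hnext].
  { intros [j E]. destruct (classic (meets_Z E)) as [HE|HE].
    - destruct (baire_step E j Hnowhere HE) as [E' HE']. now exists E'.
    - exists E. tauto. }
  set (Es := fix Es n := match n with 0 => nil | S n => next (n, Es n) end).
  assert (Hmeet : forall n, meets_Z (Es n)).
  { induction n; [exists y0; split; auto; intros a []|]. apply (Hnext (n, Es n) IHn). }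
  destruct (chain_limit_in_Z Es Hmeet) as [Zx Ex].
  { intro n. apply (Hnext (n, Es n) (Hmeet n)). }
  { intro n. apply (Hnext (n, Es n) (Hmeet n)). }
  destruct (Hcov _ Zx) as [n [Un NVn]]. apply NVn.
  apply (Hnext (n, Es n) (Hmeet n)); auto. exact (Ex (S n)).
Qed.

End Baire.

Record nat_forest (k : nat) (le : nat -> nat -> Prop) (c : nat -> nat) : Prop := {
  forest_refl : forall p, le p p;
  forest_antisym : forall p q, le p q -> le q p -> p = q;
  forest_trans : forall p q r, le p q -> le q r -> le p r;
  forest_wf : well_founded (fun q p => le q p /\ q <> p);
  forest_cone_finite : forall p, exists l, forall q, le p q -> In q l;
  forest_cone_chain : forall x y z, le x y -> le x z -> le y z \/ le z y;
  forest_label : forall p, c p < k }.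

Lemma nat_forest_countable k le c : nat_forest k le c -> countable_kforest k nat le c.
Proof.
  intros [Hr Ha Ht Hw Hup Hch Hc].
  split; [|split; [|split; [|split; [|split; [|split]]]]]; auto.
  - exists (fun p => p). auto.
  - intros C HC. destruct (classic (exists p, C p)) as [Hne|Hne].
    + destruct (wf_minimal _ C Hw Hne) as [m [Cm Hm]].
      destruct (Hup m) as [l Hl]. exists l. intros p Cp. apply Hl.
      destruct (HC m p Cm Cp) as [H|H]; auto.
      destruct (Nat.eq_dec p m) as [->|Hpm]; [apply Hr|]. exfalso. apply (Hm p); auto.
    + exists nil. intros p Cp. apply Hne; eauto.
Qed.

Record forest_data := {
  fd_le : nat -> nat -> Prop;
  fd_label : nat -> nat;
  fd_set : nat -> Pomega -> Prop }.

Definition good_forest (k : nat) (d : forest_data) : Prop :=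
  nat_forest k (fd_le d) (fd_label d) /\ forall p, scott_open (fd_set d p).

Definition trivial_forest : forest_data :=
  {| fd_le := fun p q => p = q; fd_label := fun _ => 0; fd_set := fun _ _ => False |}.

Lemma trivial_forest_good k : 0 < k -> good_forest k trivial_forest.
Proof.
  intro Hk. split; [split; simpl; intros; subst; auto|intros p y []].
  - intro p. constructor. intros q [H1 H2]. congruence.
  - exists (p :: nil). intros q ->. now left.
Qed.

Definition sum_forest (ds : nat -> forest_data) (Vs : nat -> Pomega -> Prop) : forest_data :=
  {| fd_le := fun n m => unpair1 n = unpair1 m /\ fd_le (ds (unpair1 n)) (unpair2 n) (unpair2 m);
     fd_label := fun n => fd_label (ds (unpair1 n)) (unpair2 n);
     fd_set := fun n y => fd_set (ds (unpair1 n)) (unpair2 n) y /\ Vs (unpair1 n) y |}.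

Lemma sum_forest_good k ds Vs : (forall j, good_forest k (ds j)) ->
  (forall j, scott_open (Vs j)) -> good_forest k (sum_forest ds Vs).
Proof.
  intros Hd HV. split; [split; simpl|].
  - intro p. split; auto. apply Hd.
  - intros p q [E1 H1] [_ H2]. rewrite E1 in H1.
    rewrite <- (pair_unpair p), <- (pair_unpair q), E1. f_equal.
    now apply (forest_antisym _ _ _ (proj1 (Hd (unpair1 q)))).
  - intros p q r [E1 H1] [E2 H2]. split; [congruence|]. rewrite E1 in H1 |- *.
    now apply (forest_trans _ _ _ (proj1 (Hd (unpair1 q)))) with (unpair2 q).
  - intro n. rewrite <- (pair_unpair n). generalize (unpair2 n) (unpair1 n). intros p j.
    induction p as [p IH] using (well_founded_ind (forest_wf _ _ _ (proj1 (Hd j)))).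
    constructor. intros m [[E1 H1] Hne]. rewrite unpair1_pair in E1.
    rewrite <- (pair_unpair m), E1. apply IH. rewrite unpair2_pair, E1 in H1.
    split; auto. intro He. apply Hne. now rewrite <- (pair_unpair m), E1, He.
  - intro n. destruct (forest_cone_finite _ _ _ (proj1 (Hd (unpair1 n))) (unpair2 n)) as [l Hl].
    exists (map (pairn (unpair1 n)) l). intros q [E H].
    rewrite <- (pair_unpair q), <- E. now apply in_map, Hl.
  - intros x y z [E1 H1] [E2 H2].
    destruct (forest_cone_chain _ _ _ (proj1 (Hd (unpair1 x))) _ _ _ H1 H2) as [H|H];
      [left|right]; (split; [congruence|]); [rewrite <- E1 | rewrite <- E2]; exact H.
  - intro n. apply Hd.
  - intro p. simpl. apply scott_open_family; [apply Hd | apply HV].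
Qed.

Definition root_forest (d : forest_data) (U : Pomega -> Prop) (i : nat) : forest_data :=
  {| fd_le := fun a b => match b, a with
                         | 0, _ => True
                         | S _, 0 => False
                         | S b', S a' => fd_le d a' b' end;
     fd_label := fun p => match p with 0 => i | S p => fd_label d p end;
     fd_set := fun p => match p with 0 => U | S p => fd_set d p end |}.

Lemma root_forest_good k d U i : good_forest k d -> scott_open U -> i < k ->
  good_forest k (root_forest d U i).
Proof.
  intros [[Hr Ha Ht Hw Hup Hch Hc] Ho] HU Hi. split; [split; simpl|].
  - intros [|p]; auto.
  - intros [|p] [|q]; simpl; try tauto. intros; f_equal; auto.
  - intros [|p] [|q] [|r]; simpl; try tauto. eauto.
  - assert (Hs : forall p, Acc (fun q p => fd_le (root_forest d U i) q p /\ q <> p) (S p)).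
    { intro p. induction p as [p IH] using (well_founded_ind Hw).
      constructor. intros [|q] [H1 H2]; simpl in H1; [tauto|].
      apply IH. split; auto. }
    intros [|p]; auto. constructor. intros [|q] [H1 H2]; [congruence | auto].
  - intros [|p].
    + exists (0 :: nil). intros [|q]; simpl; tauto.
    + destruct (Hup p) as [l Hl]. exists (0 :: map S l).
      intros [|q] Hq; [now left|]. right. now apply in_map, Hl.
  - intros [|x] [|y] [|z]; simpl; try tauto. eauto.
  - intros [|p]; auto.
  - intros [|p]; simpl; auto.
Qed.

Section HausdorffKuratowski.
Variable X : Type.
Variable h : X -> Pomega.
Variable k : nat.
Variable A : X -> nat.

Definition forest_represents (d : forest_data) (Z : Pomega -> Prop) : Prop :=
  forall x, Z (h x) -> (exists p, fd_set d p (h x)) /\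
    forall p, fd_set d p (h x) ->
      (forall q, fd_le d q p -> q <> p -> ~ fd_set d q (h x)) -> fd_label d p = A x.

Lemma sum_forest_represents ds Vs : (forall j, forest_represents (ds j) (Vs j)) ->
  forest_represents (sum_forest ds Vs) (fun y => exists j, Vs j y).
Proof.
  intros Hd x [j Hj]. split.
  - destruct (Hd j x Hj) as [[p Hp] _]. exists (pairn j p). simpl.
    now rewrite unpair1_pair, unpair2_pair.
  - intros n [Hn1 Hn2] Hmin. simpl. apply (Hd (unpair1 n) x Hn2); auto.
    intros q Hq Hne Hw. apply (Hmin (pairn (unpair1 n) q)); simpl;
      rewrite ?unpair1_pair, ?unpair2_pair; auto.
    intro E. apply Hne. now rewrite <- E, unpair2_pair.
Qed.

Lemma root_forest_represents d Z U i : forest_represents d Z ->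
  (forall p y, fd_set d p y -> Z y) ->
  (forall x, U (h x) -> ~ Z (h x) -> A x = i) -> forest_represents (root_forest d U i) U.
Proof.
  intros Hd HZ Hi x Hx. split; [now exists 0|].
  intros [|p] Hp Hmin; simpl in *.
  - destruct (classic (Z (h x))) as [Hz|Hz]; [exfalso|symmetry; auto].
    destruct (Hd x Hz) as [[p Hp'] _]. now apply (Hmin (S p)).
  - apply (Hd x); eauto. intros q Hq Hne. apply (Hmin (S q)); simpl; auto.
Qed.

Lemma scott_open_guard (Pr : Prop) W : scott_open W -> scott_open (fun y => Pr /\ W y).
Proof.
  intro HW. destruct (classic Pr) as [H|H].
  - apply (pred_transport _ W); [intro; tauto | auto].
  - apply (pred_transport _ (fun _ => False)); [intro; tauto | apply scott_open_family].
Qed.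

Variables P Q : nat -> Pomega -> Prop.
Hypothesis HP : forall m, scott_open (P m).
Hypothesis HQ : forall m, scott_open (Q m).
Hypothesis Himg : forall y, (exists x, h x = y) <-> forall m, P m y -> Q m y.
Hypothesis Hk : 0 < k.
Hypothesis HA : forall x, A x < k.
Variables U V : nat -> nat -> Pomega -> Prop.
Hypothesis HU : forall i n, scott_open (U i n).
Hypothesis HV : forall i n, scott_open (V i n).
Hypothesis Hcls : forall i x, i < k -> (A x = i <-> exists n, U i n (h x) /\ ~ V i n (h x)).

(* The union [W] of the basic open sets admitting a representation admits one by
   [sum_forest].  If [W] missed a point of the image, Baire would give a basic
   set [E] on which the image minus [W] is monochromatic, and [root_forest] would
   then represent [E], so [E] is part of [W] after all. *)
Theorem hausdorff_kuratowski : exists d, good_forest k d /\ forest_represents d (fun _ => True).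
Proof.
  set (representable := fun E =>
         exists d, good_forest k d /\ forest_represents d (scott_basic E)).
  destruct (functional_choice (fun j d => good_forest k d /\
    (representable (list_decode j) -> forest_represents d (scott_basic (list_decode j)))))
    as [ds Hds].
  { intro j. destruct (classic (representable (list_decode j))) as [[d [H1 H2]]|H].
    - now exists d.
    - exists trivial_forest. split; [now apply trivial_forest_good | tauto]. }
  set (Vs := fun j y => representable (list_decode j) /\ scott_basic (list_decode j) y).
  set (W := fun y => exists j, Vs j y).
  assert (HVs : forall j, scott_open (Vs j)).
  { intro j. apply scott_open_guard, scott_open_basic. }
  assert (HW : forest_represents (sum_forest ds Vs) W).
  { apply sum_forest_represents. intros j x [Hr Hx]. now apply (proj2 (Hds j)). }
  assert (Hall : forall x, W (h x)).
  { apply NNPP. intro Hn. apply not_all_ex_not in Hn as [x0 Hx0].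
    destruct (baire_Sigma02_cover P Q
      (fun n y => unpair1 n < k /\ U (unpair1 n) (unpair2 n) y)
      (fun n => V (unpair1 n) (unpair2 n)) W HP HQ
      (fun n => scott_open_guard _ _ (HU _ _)) (fun n => HV _ _)
      (open_ex _ scott_open_family _ HVs)) as [E [n [[y0 [Zy0 Ey0]] HE]]].
    - exists (h x0). split; auto. apply Himg. eauto.
    - intros y [Gy _]. apply Himg in Gy as [x <-].
      destruct (proj1 (Hcls (A x) x (HA x)) eq_refl) as [m Hm].
      exists (pairn (A x) m). rewrite unpair1_pair, unpair2_pair. split; [split; auto|]; apply Hm.
    - set (i := unpair1 n).
      assert (Hi : forall x, scott_basic E (h x) -> ~ W (h x) -> A x = i).
      { intros x HEx Hnx. assert (Zx : in_Z P Q W (h x)) by (split; auto; apply Himg; eauto).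
        destruct (HE _ Zx HEx) as [[H0 H1] H2]. apply Hcls; auto. now exists (unpair2 n). }
      assert (Hik : i < k) by apply (HE _ Zy0 Ey0).
      assert (HRE : representable E).
      { exists (root_forest (sum_forest ds Vs) (scott_basic E) i). split.
        - apply root_forest_good; auto using scott_open_basic.
          apply sum_forest_good; auto. intro; apply Hds.
        - apply root_forest_represents with W; auto. intros p y [_ Hy]. now exists (unpair1 p). }
      apply Zy0. exists (list_code E). unfold Vs. now rewrite list_decode_code. }
  exists (sum_forest ds Vs). split.
  - apply sum_forest_good; auto. intro; apply Hds.
  - intros x _. now apply HW.
Qed.

End HausdorffKuratowski.

Lemma Pi02_scott_as_implications Z : Pi02 scott_open Z ->
  exists P Q : nat -> Pomega -> Prop, (forall m, scott_open (P m)) /\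
    (forall m, scott_open (Q m)) /\ forall y, Z y <-> forall m, P m y -> Q m y.
Proof.
  intros [P [Q [HP [HQ HZ]]]]. exists P, Q. split; [|split]; auto.
  intro y. split.
  - intros Hy m Pm. apply NNPP. intro Qm. apply (proj2 (HZ y)); eauto.
  - intro H. apply NNPP. intro Hn. apply HZ in Hn as [m [Pm Qm]]. auto.
Qed.

Lemma forest_represents_Sigma0_forest X opn R th k (h : X -> Pomega) A d :
  nat_forest k (fd_le d) (fd_label d) -> kpartition k A ->
  forest_represents X h A d (fun _ => True) ->
  (forall p, Sigma0 opn R th (fun x => fd_set d p (h x))) ->
  Sigma0_forest opn R th k nat (fd_le d) (fd_label d) A.
Proof.
  intros Hd HA Hrep HB. split; auto.
  exists (fun p x => fd_set d p (h x)). split; [|split]; auto.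
  - intro x. apply (Hrep x I).
  - intros i Hi x. destruct (Hrep x I) as [Hcov Hlab]. split.
    + intros <-. destruct (wf_minimal _ (fun p => fd_set d p (h x)) (forest_wf _ _ _ Hd) Hcov)
        as [p [Hp Hmin]].
      exists p. split; [|split]; auto.
    + intros [p [<- [Hp Hmin]]]. symmetry. now apply Hlab.
Qed.


Lemma Sigma0_forest_Delta0_k X opn R th th1 k (A : X -> nat) P le c :
  open_family opn -> nat_wellorder R -> R th th1 ->
  countable_kforest k P le c -> Sigma0_forest opn R th k P le c A -> Delta0_k opn R th1 k A.
Proof.
  intros Hop HR Hth1 (_ & _ & _ & [e He] & _) [HA [B [HB [_ Hiff]]]].
  assert (Hbelow : forall p, Sigma0 opn R th (fun x => exists q, B q x /\ le q p /\ q <> p)).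
  { intro p. apply (Sigma0_ex_countable X opn Hop R HR P e th); auto.
    intro q. apply (pred_transport _ (fun x => (le q p /\ q <> p) /\ B q x)); [intro; tauto|].
    now apply Sigma0_guard. }
  assert (Hclass : forall i, i < k -> Sigma0 opn R th1 (fun x => A x = i)).
  { intros i Hi. apply (pred_transport _ (fun x => exists p, c p = i /\
                          (B p x /\ ~ exists q, B q x /\ le q p /\ q <> p))).
    - intro x. rewrite Hiff by auto. firstorder.
    - apply (Sigma0_ex_countable X opn Hop R HR P e th1); auto. intro p.
      apply Sigma0_guard; auto. intros _. apply (Sigma0_and X opn Hop R HR).
      + now apply (Sigma0_mono X opn Hop R HR th).
      + now apply (Sigma0_compl X opn Hop R HR th). }
  split; auto. intros i Hi. split; auto.
  apply (pred_transport _ (fun x => exists j, (j < k /\ j <> i) /\ A x = j)).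
  - intro x. split; [intros [j [[_ Hj] E]]; congruence | intro H; exists (A x); auto].
  - apply (Sigma0_ex X opn Hop R). intro j. apply Sigma0_guard; auto. intros [Hj _]. auto.
Qed.

Section QuasiPolish.
Variable X : Type.
Variable opn : (X -> Prop) -> Prop.
Variable f : X -> Pomega.
Variable S : Pomega -> Prop.
Hypothesis Hinj : forall x y, f x = f y -> x = y.
Hypothesis HS : Pi02 scott_open S.
Hypothesis Himg : forall y, S y <-> exists x, f x = y.
Hypothesis Hopn : forall U, opn U <-> exists W, scott_open W /\ forall x, U x <-> W (f x).
Variable R : nat -> nat -> Prop.
Hypothesis HR : nat_wellorder R.
Variables th th1 k : nat.
Hypothesis Hk : 0 < k.
Hypothesis Hth : ~ ord_is0 R th.
Hypothesis Hsucc : ord_succ R th th1.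

Notation Sg := (Sigma0 opn R).
Let Hop : open_family opn := open_family_induced X opn f Hopn.

Lemma Sigma0_succ_decomp B : Sg th1 B ->
  exists U V : nat -> X -> Prop, (forall n, Sg th (U n)) /\ (forall n, Sg th (V n)) /\
    forall x, B x <-> exists n, U n x /\ ~ V n x.
Proof.
  intro HB. destruct (ord_succ_ge2 R HR th th1 Hth Hsucc) as [H2|H2].
  - destruct (Sigma0_is2_inv X opn R th1 _ H2 HB) as [U [V [HU [HV HBe]]]].
    exists U, V. split; [|split]; auto; intro n; now apply Sigma0_open.
  - destruct (Sigma0_gt2_inv X opn R th1 _ H2 HB) as [C [HC HBe]].
    exists (fun _ _ => True), C. split; [|split].
    + intro; now apply Sigma0_full.
    + intro n. destruct (HC n) as [b [Hb HCb]]. apply (Sigma0_le X opn Hop R HR b); auto.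
      destruct (proj2 Hsucc b Hb); auto.
    + intro x. rewrite HBe. split; intros [n Hn]; exists n; tauto.
Qed.

Lemma Delta0_k_decomp A : Delta0_k opn R th1 k A ->
  exists U V : nat -> nat -> X -> Prop, (forall i n, Sg th (U i n)) /\
    (forall i n, Sg th (V i n)) /\
    forall i x, i < k -> (A x = i <-> exists n, U i n x /\ ~ V i n x).
Proof.
  intros [_ HD].
  destruct (functional_choice (fun i (UV : (nat -> X -> Prop) * (nat -> X -> Prop)) =>
    (forall n, Sg th (fst UV n)) /\ (forall n, Sg th (snd UV n)) /\
    (i < k -> forall x, A x = i <-> exists n, fst UV n x /\ ~ snd UV n x))) as [UV HUV].
  { intro i. destruct (Nat.lt_ge_cases i k) as [Hi|Hi].
    - destruct (Sigma0_succ_decomp _ (proj1 (HD i Hi))) as [U [V HH]].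
      exists (U, V). simpl. tauto.
    - exists (fun _ _ => False, fun _ _ => False). simpl.
      split; [|split]; [intro; now apply Sigma0_empty .. | lia]. }
  exists (fun i => fst (UV i)), (fun i => snd (UV i)).
  split; [|split]; intros; now apply HUV.
Qed.

(* Make the Sigma^0_th pieces of the level sets open in a quasi-Polish refinement;
   there the level sets are Sigma^0_2, so Hausdorff-Kuratowski applies, and the
   resulting open node sets are Sigma^0_th in the original topology. *)
Lemma Delta0_k_Sigma0_forest A : Delta0_k opn R th1 k A ->
  exists le c, countable_kforest k nat le c /\ Sigma0_forest opn R th k nat le c A.
Proof.
  intro HD. destruct (Delta0_k_decomp A HD) as [U [V [HU [HV HA]]]].
  set (C := interleave (fun p => U (unpair1 p) (unpair2 p))
                       (fun p => V (unpair1 p) (unpair2 p))).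
  destruct (refine_Sigma0 X opn f S Hinj HS Himg Hopn R HR th C) as [G [HQP [HG HCG]]].
  { intro j. unfold C. destruct (Nat.Even_or_Odd j) as [[m ->]|[m ->]];
      [rewrite interleave_even | rewrite interleave_odd]; auto. }
  apply functional_choice in HCG as [W HW].
  destruct (Pi02_scott_as_implications _ HQP) as [P [Q [HP [HQ Himg']]]].
  destruct (hausdorff_kuratowski X (refine_embed X f G) k A P Q HP HQ Himg'
    Hk (proj1 HD) (fun i n => W (2 * pairn i n)) (fun i n => W (2 * pairn i n + 1)))
    as [d [[Hd HWd] Hrep]]; try (intros; apply HW).
  { intros i x Hi. rewrite (HA i x Hi).
    assert (HUV : forall n, (U i n x <-> W (2 * pairn i n) (refine_embed X f G x)) /\
                            (V i n x <-> W (2 * pairn i n + 1) (refine_embed X f G x))).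
    { intro n. rewrite <- !(proj2 (HW _)). unfold C.
      now rewrite interleave_even, interleave_odd, unpair1_pair, unpair2_pair. }
    split; intros [n Hn]; exists n; rewrite (proj1 (HUV n)), (proj2 (HUV n)) in *; auto. }
  exists (fd_le d), (fd_label d). split; [now apply nat_forest_countable|].
  apply forest_represents_Sigma0_forest with (h := refine_embed X f G); auto.
  - apply HD.
  - intro p. now apply refine_open_Sigma0.
Qed.

End QuasiPolish.

Theorem theorem4p15 :
  forall (k : nat), 2 <= k ->
  forall (X : Type) (opn : (X -> Prop) -> Prop), quasi_polish opn ->
  forall (R : nat -> nat -> Prop) (theta theta1 : nat),
    nat_wellorder R ->
    ~ ord_is0 R theta ->            (* theta >= 1 *)
    ord_succ R theta theta1 ->      (* theta1 = theta + 1 *)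
  forall (A : X -> nat),
    (exists (P : Type) (le : P -> P -> Prop) (c : P -> nat),
        countable_kforest k P le c /\ Sigma0_forest opn R theta k P le c A)
    <-> Delta0_k opn R theta1 k A.
Proof.
  intros k Hk X opn Hqp R th th1 HR Hth Hsucc A.
  destruct Hqp as [S [f [HS [HSf [Hinj [Hsurj Hopn]]]]]].
  assert (Himg : forall y, S y <-> exists x, f x = y).
  { intro y. split; auto. now intros [x <-]. }
  split.
  - intros [P [le [c [HF HA]]]].
    apply (Sigma0_forest_Delta0_k X opn R th th1 k A P le c); auto.
    + exact (open_family_induced X opn f Hopn).
    + apply Hsucc.
  - intro HD. destruct (Delta0_k_Sigma0_forest X opn f S Hinj HS Himg Hopn R HR th th1 k
      ltac:(lia) Hth Hsucc A HD) as [le [c H]].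
    now exists nat, le, c.
Qed.
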